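(* Let $p,n$ be positive integers with $c=\gcd(p,n)$ prime, and $y\in\mathbb{Z}_n$. Let $\varphi_i,\varphi_j\in\operatorname{End}((\mathbb{Z}_n,y,y))$ (where $\varphi_m$ denotes the pointed endomorphism with $\varphi_m(y+1)=m$) and let $\alpha\in\hom(P(\widetilde{\mathcal{T}(p,2)}),(\mathbb{Z}_n,y,y))$ be a nontrivial (non-constant) coloring. Then $\varphi_i\circ\alpha=\varphi_j\circ\alpha$ if and only if $i\equiv j\pmod c$.
   Context: $\mathbb{Z}_n$ is the dihedral quandle ($x\triangleright y=2y-x$ mod $n$) and $(\mathbb{Z}_n,y,y)$ the $2$-pointed quandle with both basepoints $y$; pointed endomorphisms are quandle endomorphisms fixing $y$, and each is determined by its value at $y+1$. $P(\widetilde{\mathcal{T}(p,2)})=(Q,x_1,x_{p+1})$ with $Q=\langle x_1,\dots,x_{p+1}\mid x_p=x_2\triangleright x_{p+1},\ x_i=x_{i+2}\triangleright x_{i+1}\ (1\le i\le p-1)\rangle$, the fundamental pointed quandle of the $1$-linkoid of $(p,2)$-torus type; $\hom$ denotes basepoint-preserving homomorphisms. Since $c\mid n$, the congruence $i\equiv j \pmod c$ is well defined for $i,j\in\mathbb{Z}_n$. *)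

From mathcomp Require Import all_boot.
Set Implicit Arguments. Unset Strict Implicit. Unset Printing Implicit Defensive.

Lemma ord_pos n (x : 'I_n) : 0 < n.
Proof. exact: leq_ltn_trans (leq0n x) (ltn_ord x). Qed.

Definition zmod n (x : 'I_n) (k : nat) : 'I_n := Ordinal (ltn_pmod k (ord_pos x)).

Definition dop n (x z : 'I_n) : 'I_n := zmod x (2 * z + (n - x)).

Definition zsucc n (y : 'I_n) : 'I_n := zmod y y.+1.

Definition pointed_endo n (y : 'I_n) (f : 'I_n -> 'I_n) : Prop :=
  (forall x z, f (dop x z) = dop (f x) (f z)) /\ f y = y.

(* Quandle terms in generators x_1, ..., x_{p+1}; generator x_{k+1} is
   [qgen k] with k : 'I_(p+1). [qop a b] is a |> b, [qinv a b] is a |>^{-1} b. *)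
Inductive qterm (m : nat) : Type :=
| qgen of 'I_m
| qop of qterm m & qterm m
| qinv of qterm m & qterm m.

(* The congruence on terms defining the presented quandle
   Q = < x_1..x_{p+1} | x_p = x_2 |> x_{p+1}, x_i = x_{i+2} |> x_{i+1} (1<=i<=p-1) >. *)
Inductive qeq (p : nat) : qterm p.+1 -> qterm p.+1 -> Prop :=
| qeq_refl t : qeq t t
| qeq_sym t s : qeq t s -> qeq s t
| qeq_trans t s u : qeq t s -> qeq s u -> qeq t u
| qeq_op t t' s s' : qeq t t' -> qeq s s' -> qeq (qop t s) (qop t' s')
| qeq_inv t t' s s' : qeq t t' -> qeq s s' -> qeq (qinv t s) (qinv t' s')
| qeq_idem t : qeq (qop t t) t
| qeq_opinv t s : qeq (qop (qinv t s) s) t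
| qeq_invop t s : qeq (qinv (qop t s) s) t
| qeq_distr t s u : qeq (qop (qop t s) u) (qop (qop t u) (qop s u))
| qeq_rel0 : qeq (qgen (inord p.-1)) (qop (qgen (inord 1)) (qgen (inord p)))
| qeq_rel k : k < p.-1 ->
    qeq (qgen (inord k)) (qop (qgen (inord k.+2)) (qgen (inord k.+1))).

(* basepoint-preserving homomorphisms (Q, x_1, x_{p+1}) -> (Z_n, y, y),
   represented as maps on terms that are well defined on Q *)
Definition pointed_hom (p : nat) n (y : 'I_n) (alpha : qterm p.+1 -> 'I_n) : Prop :=
  [/\ forall t s, qeq t s -> alpha t = alpha s,
      forall t s, alpha (qop t s) = dop (alpha t) (alpha s),
      (* in the dihedral quandle |>^{-1} = |> *)
      forall t s, alpha (qinv t s) = dop (alpha t) (alpha s),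
      alpha (qgen ord0) = y
    & alpha (qgen ord_max) = y].

From mathcomp Require Import all_boot all_algebra ring zify.
Import GRing.Theory.
Set Implicit Arguments. Unset Strict Implicit. Unset Printing Implicit Defensive.
Local Open Scope ring_scope.

(* Since x |> z = 2z - x is affine, a pointed endomorphism phi of (Z_n, y, y)
   is the affine map u |-> y + (u - y) (phi (y + 1) - y), and the relations of
   Q force the colours of the generators x_1, ..., x_{p+1} to form the
   arithmetic progression y + k d, d = alpha x_2 - y; as x_{p+1} is also
   coloured y, n | p d.
   All colours then lie in y + Z d, so phi_i o alpha = phi_j o alpha iff
   n | d (i - j).  A non-constant colouring has n not dividing d, and then, as
   gcd(p, n) is prime, n | d (i - j) iff gcd(p, n) | i - j. *)

Lemma eqn_mod_dvdz (c i j : nat) : (i = j %[mod c])%N <-> (c%:Z %| i%:Z - j%:Z)%Z.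
Proof. by rewrite -eqz_mod_dvd !modz_nat; split=> [-> | /eqP []]. Qed.

Lemma dvdz_mul_gcdn (p n : nat) (d x : int) : prime (gcdn p n) ->
  (n%:Z %| p%:Z * d)%Z -> ~~ (n%:Z %| d)%Z ->
  (n%:Z %| d * x)%Z = (gcdn p n %| x)%Z.
Proof.
move=> c_prime n_pd n_d; apply/idP/idP => [n_dx | c_x].
- apply/negPn/negP => c_x.
  have [u [v uv]] := Bezoutz p x.
  have n_gd : (n%:Z %| gcdz p x * d)%Z.
    rewrite -uv (_ : _ * d = u * (p%:Z * d) + v * (d * x)); last by ring.
    by apply: rpredD; apply: dvdz_mull.
  (* gcd(n, gcd(p, x)) divides the prime gcd(p, n), which does not divide x *)
  have cop : coprimez n (gcdz p x).
    rewrite /coprimez /gcdz /= -[1]/(1%N : int) eqz_nat gcdnA (gcdnC n).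
    by move: (prime_coprime `|x| c_prime); rewrite /coprime => ->.
  by move: n_d; rewrite -(Gauss_dvdzr _ cop) n_gd.
- have [u [v uv]] := Bezoutz p n.
  have n_dc : (n%:Z %| d * (gcdn p n)%:Z)%Z.
    rewrite -[_%:Z]/(gcdz p n) -uv.
    rewrite (_ : d * _ = u * (p%:Z * d) + (v * d) * n%:Z); last by ring.
    by apply: rpredD; apply: dvdz_mull; rewrite ?dvdzz.
  exact: dvdz_trans n_dc (dvdz_mul (dvdzz d) c_x).
Qed.

Section DihedralQuandle.
Variable n : nat.
Implicit Types (u v x z : 'I_n).

Lemma ord_modz_inj u v : (u%:Z = v%:Z %[mod n])%Z -> u = v.
Proof. by rewrite !modz_nat !modn_small // => -[/val_inj]. Qed.

Lemma zmod_modz x k : ((zmod x k)%:Z = k%:Z %[mod n])%Z.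
Proof. by rewrite !modz_nat modn_mod. Qed.

Lemma dop_modz x z : ((dop x z)%:Z = 2 * z%:Z - x%:Z %[mod n])%Z.
Proof.
rewrite zmod_modz PoszD PoszM -subzn 1?ltnW //.
by rewrite (_ : _ + _ = n%:Z + (2 * z%:Z - x%:Z)) ?modzDl //; ring.
Qed.

Lemma modz_reflect (a a' b b' : int) : (a = a' %[mod n])%Z -> (b = b' %[mod n])%Z ->
  (2 * b - a = 2 * b' - a' %[mod n])%Z.
Proof.
by move=> ha hb; rewrite -modzDm -modzNm ha modzNm -modzMmr hb modzMmr modzDm.
Qed.

Lemma modz_arith_progression (s : nat -> int) m :
  (forall k, (k.+2 <= m)%N -> (s k.+2 = 2 * s k.+1 - s k %[mod n])%Z) ->
  forall k, (k <= m)%N -> (s k = s 0%N + k%:Z * (s 1%N - s 0%N) %[mod n])%Z.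
Proof.
move=> rec; elim/ltn_ind=> -[|[|k]] IH km; try by congr (_ %% _)%Z; ring.
rewrite rec // (modz_reflect (IH k _ _) (IH k.+1 _ _)); try lia.
by congr (_ %% _)%Z; rewrite -[k.+2]addn2 -[k.+1]addn1 !PoszD; ring.
Qed.

Lemma pointed_endo_affine (y : 'I_n) f : pointed_endo y f -> forall u,
  ((f u)%:Z = y%:Z + (u%:Z - y%:Z) * ((f (zsucc y))%:Z - y%:Z) %[mod n])%Z.
Proof.
case=> f_dop f_y u; pose s k := (f (zmod y (y + k)))%:Z.
have s0 : s 0%N = y%:Z.
  by rewrite /s (_ : zmod y _ = y) ?f_y //; apply: val_inj; rewrite /= addn0 modn_small.
have s1 : s 1%N = f (zsucc y) by rewrite /s addn1.
have zmod_rec k : zmod y (y + k.+2) = dop (zmod y (y + k)) (zmod y (y + k.+1)).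
  apply: ord_modz_inj; rewrite dop_modz (modz_reflect (zmod_modz _ _) (zmod_modz _ _)).
  by rewrite zmod_modz; congr (_ %% _)%Z; rewrite -[k.+2]addn2 -[k.+1]addn1 !PoszD; ring.
have s_rec k : (s k.+2 = 2 * s k.+1 - s k %[mod n])%Z.
  by rewrite /s zmod_rec f_dop dop_modz.
set k := (u + (n - y))%N. (* a natural representative of u - y *)
have u_eq : u = zmod y (y + k).
  apply: ord_modz_inj; rewrite zmod_modz /k !PoszD -subzn 1?ltnW //.
  by rewrite (_ : _ + _ = u%:Z + n%:Z) ?modzDr //; ring.
rewrite {1}u_eq (modz_arith_progression (fun k _ => s_rec k) (leqnn k)) -/(s k) s0 s1.
set c := _ - y%:Z.
rewrite /k PoszD -subzn 1?ltnW //.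
by rewrite (_ : _ + _ = c * n%:Z + (y%:Z + (u%:Z - y%:Z) * c)) ?modzMDl //; ring.
Qed.

Lemma pointed_endo_eqE (y : 'I_n) f g u : pointed_endo y f -> pointed_endo y g ->
  f u = g u <->
  (n%:Z %| (u%:Z - y%:Z) * ((f (zsucc y))%:Z - (g (zsucc y))%:Z))%Z.
Proof.
move=> /pointed_endo_affine f_aff /pointed_endo_affine g_aff.
set a := (f (zsucc y))%:Z; set b := (g (zsucc y))%:Z.
rewrite (_ : _ * _ = y%:Z + (u%:Z - y%:Z) * (a - y%:Z)
                      - (y%:Z + (u%:Z - y%:Z) * (b - y%:Z))); last by ring.
rewrite -eqz_mod_dvd -f_aff -g_aff.
by split=> [-> // | /eqP/ord_modz_inj].
Qed.

Section Coloring.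
Variables (p : nat) (y : 'I_n) (alpha : qterm p.+1 -> 'I_n).
Hypothesis alpha_hom : pointed_hom y alpha.
Let d : int := (alpha (qgen (inord 1)))%:Z - y%:Z.

Lemma pointed_hom_gen k : (k <= p)%N ->
  ((alpha (qgen (inord k)))%:Z = y%:Z + k%:Z * d %[mod n])%Z.
Proof.
move=> kp; case: alpha_hom => alpha_eq alpha_op _ alpha_x1 _.
pose s k := (alpha (qgen (inord k)))%:Z.
have s0 : s 0%N = y%:Z.
  by rewrite /s (_ : inord 0 = ord0) ?alpha_x1 //; apply: val_inj; rewrite /= inordK.
rewrite -/(s k) /d -/(s 1%N) -s0; apply: (modz_arith_progression _ kp) => {kp}k kp.
have rel : (s k = 2 * s k.+1 - s k.+2 %[mod n])%Z.
  by rewrite /s (alpha_eq _ _ (qeq_rel (_ : k < p.-1)%N)) ?alpha_op ?dop_modz //; lia.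
by rewrite (modz_reflect rel (erefl (s k.+1 %% n)%Z)); congr (_ %% _)%Z; ring.
Qed.

Lemma pointed_hom_period : (n%:Z %| p%:Z * d)%Z.
Proof.
case: (alpha_hom) => _ _ _ _ alpha_xp1.
have := pointed_hom_gen (leqnn p).
rewrite (_ : inord p = ord_max); last by apply: val_inj; rewrite /= inordK.
rewrite alpha_xp1 -{1}[y%:Z]addr0 => /eqP; rewrite eqz_modDl eqz_mod_dvd.
by rewrite sub0r rpredN.
Qed.

Lemma pointed_hom_dvdz (x : int) : (n%:Z %| d * x)%Z ->
  forall t, (n%:Z %| ((alpha t)%:Z - y%:Z) * x)%Z.
Proof.
move=> n_dx; case: (alpha_hom) => _ alpha_op alpha_inv _ _.
have dop_closed u v : (n%:Z %| (u%:Z - y%:Z) * x)%Z -> (n%:Z %| (v%:Z - y%:Z) * x)%Z ->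
    (n%:Z %| ((dop u v)%:Z - y%:Z) * x)%Z.
  move=> n_u n_v; have /eqP := dop_modz u v; rewrite eqz_mod_dvd => n_dop.
  rewrite (_ : _ * x = ((dop u v)%:Z - (2 * v%:Z - u%:Z)) * x
                        + 2 * ((v%:Z - y%:Z) * x) - (u%:Z - y%:Z) * x); last by ring.
  by apply: rpredB => //; apply: rpredD; [apply: dvdz_mulr | apply: dvdz_mull].
elim=> [g | t n_t s n_s | t n_t s n_s]; rewrite ?alpha_op ?alpha_inv ?dop_closed //.
have /eqP := pointed_hom_gen (ltn_ord g); rewrite inord_val eqz_mod_dvd => n_g.
rewrite (_ : _ * x = ((alpha (qgen g))%:Z - (y%:Z + g%:Z * d)) * x + g%:Z * (d * x)).
  by apply: rpredD; [apply: dvdz_mulr | apply: dvdz_mull].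
by ring.
Qed.

Lemma pointed_hom_step_ndvd : (exists t s, alpha t <> alpha s) -> ~~ (n%:Z %| d)%Z.
Proof.
move=> [t [s alpha_ts]]; apply/negP => n_d; apply: alpha_ts.
have alpha_y w : alpha w = y.
  apply/ord_modz_inj/eqP; rewrite eqz_mod_dvd -[_ - _]mulr1.
  by apply: pointed_hom_dvdz; rewrite mulr1.
by rewrite !alpha_y.
Qed.

End Coloring.

End DihedralQuandle.

Local Close Scope ring_scope.
Unset Implicit Arguments.

Theorem lemma6p14 (p n : nat) (hp : 0 < p) (hn : 0 < n)
  (hc : prime (gcdn p n)) (y : 'I_n) (i j : 'I_n)
  (phi_i phi_j : 'I_n -> 'I_n)
  (Hi : pointed_endo y phi_i) (Hi1 : phi_i (zsucc y) = i)
  (Hj : pointed_endo y phi_j) (Hj1 : phi_j (zsucc y) = j)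
  (alpha : qterm p.+1 -> 'I_n) (Ha : @pointed_hom p n y alpha)
  (Hnt : exists t s, alpha t <> alpha s) :
  (forall t, phi_i (alpha t) = phi_j (alpha t)) <-> i = j %[mod gcdn p n].
Proof.
have step_ndvd := pointed_hom_step_ndvd Ha Hnt.
rewrite eqn_mod_dvdz -(dvdz_mul_gcdn _ hc (pointed_hom_period Ha) step_ndvd).
split=> [agree | n_dij t].
- by have /(pointed_endo_eqE _ Hi Hj) := agree (qgen (inord 1)); rewrite Hi1 Hj1.
- by apply/(pointed_endo_eqE _ Hi Hj); rewrite Hi1 Hj1; apply: pointed_hom_dvdz.
Qed.
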